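(* For every modal formula $A$ and label $x$, $\mathsf{labIGL}\vdash x:\Box(\Box A\to A)\to\Box A$; that is, the sequent $\emptyset\Rightarrow x:\Box(\Box A\to A)\to\Box A$ has an $\infty$-proof in $\mathsf{labIK4}$.
   Context: Modal formulas: $A ::= p \mid \bot \mid A\wedge A \mid A \vee A \mid A \to A \mid \Box A \mid \Diamond A$. Labelled sequents $\mathcal R,\Gamma\Rightarrow\Delta$ with $\mathcal R$ a set of relational atoms $xRy$ and $\Gamma,\Delta$ multisets of labelled formulas $x:A$. $\mathsf{labK4}$ rules (premisses / conclusion): id $\mathcal R,x:p\Rightarrow x:p$; $\bot$L $\mathcal R,x:\bot,\Gamma\Rightarrow\Delta$; cut: $\mathcal R,\Gamma\Rightarrow\Delta,x:A$ and $\mathcal R,\Gamma',x:A\Rightarrow\Delta'$ / $\mathcal R,\Gamma,\Gamma'\Rightarrow\Delta,\Delta'$; left/right weakening and contraction; thinning $\mathcal R,\Gamma\Rightarrow\Delta$ / $\mathcal R,\mathcal R',\Gamma\Rightarrow\Delta$; $\to$L: $\mathcal R,\Gamma\Rightarrow\Delta,x:A$ and $\mathcal R,\Gamma',x:B\Rightarrow\Delta'$ / $\mathcal R,\Gamma,\Gamma',x:A\to B\Rightarrow\Delta,\Delta'$; $\to$R: $\mathcal R,\Gamma,x:A\Rightarrow\Delta,x:B$ / $\mathcal R,\Gamma\Rightarrow\Delta,x:A\to B$; $\wedge$L, $\wedge$R, $\vee$L, $\vee$R as in Gentzen's LK on labelled formulas with the same label; $\Diamond$L ($y$ fresh): $\mathcal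 R,xRy,\Gamma,y:A\Rightarrow\Delta$ / $\mathcal R,\Gamma,x:\Diamond A\Rightarrow\Delta$; $\Diamond$R: $\mathcal R,xRy,\Gamma\Rightarrow\Delta,y:A$ / $\mathcal R,xRy,\Gamma\Rightarrow\Delta,x:\Diamond A$; $\Box$R ($y$ fresh): $\mathcal R,xRy,\Gamma\Rightarrow\Delta,y:A$ / $\mathcal R,\Gamma\Rightarrow\Delta,x:\Box A$; $\Box$L: $\mathcal R,xRy,\Gamma,y:A\Rightarrow\Delta$ / $\mathcal R,xRy,\Gamma,x:\Box A\Rightarrow\Delta$; tr: $\mathcal R,xRy,yRz,xRz,\Gamma\Rightarrow\Delta$ / $\mathcal R,xRy,yRz,\Gamma\Rightarrow\Delta$. $\mathsf{labIK4}$ is the restriction to sequents with exactly one labelled formula on the right. A preproof is a possibly infinite tree of rule instances whose leaves are zero-premiss rules; a trace along an infinite branch $(S_i)$ is a sequence of labels $(x_i)_{i\ge k}$ with, for each $i$, $x_i=x_{i+1}$ or $x_iRx_{i+1}$ in the relational context of $S_i$ (progress point); progressing = infinitely many progress points; an $\infty$-proof is a preproof all of whose infinite branches have a progressing trace. $\mathsf{labIGL}$ is the class of $\infty$-proofs of $\mathsf{labIK4}$. *)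

From Stdlib Require Import List Permutation Arith.
Import ListNotations.

Inductive form : Type :=
| Var : nat -> form
| Bot : form
| And : form -> form -> form
| Or  : form -> form -> form
| Imp : form -> form -> form
| Box : form -> form
| Dia : form -> form.

Definition label := nat.
Definition lform : Type := (label * form)%type.
Definition ratom : Type := (label * label)%type.

(* Labelled sequent R, Gamma => Delta.  R is a set (represented by a list,
   compared up to membership); Gamma, Delta are multisets (lists compared up
   to permutation). *)
Record sequent : Type := Seq { rel : list ratom; lhs : list lform; rhs : list lform }.

Definition labels_rel (R : list ratom) : list label :=
  flat_map (fun a => [fst a; snd a]) R.
Definition labels_seq (s : sequent) : list label :=
  labels_rel (rel s) ++ map fst (lhs s) ++ map fst (rhs s).
Definition fresh (y : label) (s : sequent) : Prop := ~ In y (labels_seq s).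

(* Rule instances of labK4 on concrete representatives:
   [basic concl prems] *)
Inductive basic : sequent -> list sequent -> Prop :=
| r_id : forall R x p,
    basic (Seq R [(x, Var p)] [(x, Var p)]) []
| r_botL : forall R x G D,
    basic (Seq R ((x, Bot) :: G) D) []
| r_cut : forall R G G' D D' x A,
    basic (Seq R (G ++ G') (D ++ D'))
          [Seq R G (D ++ [(x, A)]); Seq R (G' ++ [(x, A)]) D']
| r_wL : forall R G D a,
    basic (Seq R (G ++ [a]) D) [Seq R G D]
| r_wR : forall R G D a,
    basic (Seq R G (D ++ [a])) [Seq R G D]
| r_cL : forall R G D a,
    basic (Seq R (G ++ [a]) D) [Seq R (G ++ [a; a]) D]
| r_cR : forall R G D a,
    basic (Seq R G (D ++ [a])) [Seq R G (D ++ [a; a])]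
| r_thin : forall R R' G D,
    basic (Seq (R ++ R') G D) [Seq R G D]
| r_impL : forall R G G' D D' x A B,
    basic (Seq R (G ++ G' ++ [(x, Imp A B)]) (D ++ D'))
          [Seq R G (D ++ [(x, A)]); Seq R (G' ++ [(x, B)]) D']
| r_impR : forall R G D x A B,
    basic (Seq R G (D ++ [(x, Imp A B)])) [Seq R (G ++ [(x, A)]) (D ++ [(x, B)])]
| r_andL1 : forall R G D x A B,
    basic (Seq R (G ++ [(x, And A B)]) D) [Seq R (G ++ [(x, A)]) D]
| r_andL2 : forall R G D x A B,
    basic (Seq R (G ++ [(x, And A B)]) D) [Seq R (G ++ [(x, B)]) D]
| r_andR : forall R G D x A B,
    basic (Seq R G (D ++ [(x, And A B)]))
          [Seq R G (D ++ [(x, A)]); Seq R G (D ++ [(x, B)])]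
| r_orL : forall R G D x A B,
    basic (Seq R (G ++ [(x, Or A B)]) D)
          [Seq R (G ++ [(x, A)]) D; Seq R (G ++ [(x, B)]) D]
| r_orR1 : forall R G D x A B,
    basic (Seq R G (D ++ [(x, Or A B)])) [Seq R G (D ++ [(x, A)])]
| r_orR2 : forall R G D x A B,
    basic (Seq R G (D ++ [(x, Or A B)])) [Seq R G (D ++ [(x, B)])]
| r_diaL : forall R G D x y A,
    fresh y (Seq R (G ++ [(x, Dia A)]) D) ->
    basic (Seq R (G ++ [(x, Dia A)]) D) [Seq ((x, y) :: R) (G ++ [(y, A)]) D]
| r_diaR : forall R G D x y A,
    basic (Seq ((x, y) :: R) G (D ++ [(x, Dia A)]))
          [Seq ((x, y) :: R) G (D ++ [(y, A)])]
| r_boxR : forall R G D x y A,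
    fresh y (Seq R G (D ++ [(x, Box A)])) ->
    basic (Seq R G (D ++ [(x, Box A)])) [Seq ((x, y) :: R) G (D ++ [(y, A)])]
| r_boxL : forall R G D x y A,
    basic (Seq ((x, y) :: R) (G ++ [(x, Box A)]) D)
          [Seq ((x, y) :: R) (G ++ [(y, A)]) D]
| r_tr : forall R G D x y z,
    basic (Seq ((x, y) :: (y, z) :: R) G D)
          [Seq ((x, z) :: (x, y) :: (y, z) :: R) G D].

Definition seq_eq (s t : sequent) : Prop :=
  (forall a, In a (rel s) <-> In a (rel t)) /\
  Permutation (lhs s) (lhs t) /\ Permutation (rhs s) (rhs t).

Definition ruleK4 (c : sequent) (ps : list sequent) : Prop :=
  exists c0 ps0, seq_eq c c0 /\ Forall2 seq_eq ps ps0 /\ basic c0 ps0.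

Definition ruleIK4 (c : sequent) (ps : list sequent) : Prop :=
  ruleK4 c ps /\ length (rhs c) = 1 /\ Forall (fun p => length (rhs p) = 1) ps.

(* A possibly infinite tree: nodes are addressed by paths (list of child
   indices); [T p = Some s] means node p exists and is labelled by s. *)
Definition tree := list nat -> option sequent.

Definition preproof (r : sequent -> list sequent -> Prop) (T : tree)
    (s0 : sequent) : Prop :=
  T [] = Some s0 /\
  forall p s, T p = Some s ->
    exists ps, r s ps /\
      (forall i, i < length ps -> T (p ++ [i]) = nth_error ps i) /\
      (forall i, length ps <= i -> T (p ++ [i]) = None).

Definition bpath (b : nat -> nat) (n : nat) : list nat := map b (seq 0 n).

Definition inf_branch (T : tree) (b : nat -> nat) (Sq : nat -> sequent) : Prop :=
  forall i, T (bpath b i) = Some (Sq i).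

Definition progress_point (Sq : nat -> sequent) (xs : nat -> label) (i : nat) : Prop :=
  In (xs i, xs (Datatypes.S i)) (rel (Sq i)).

Definition is_trace (Sq : nat -> sequent) (k : nat) (xs : nat -> label) : Prop :=
  forall i, k <= i -> xs i = xs (Datatypes.S i) \/ progress_point Sq xs i.

Definition progressing (Sq : nat -> sequent) (k : nat) (xs : nat -> label) : Prop :=
  is_trace Sq k xs /\
  forall n, exists i, n <= i /\ k <= i /\ progress_point Sq xs i.

Definition inf_proof (r : sequent -> list sequent -> Prop) (T : tree)
    (s0 : sequent) : Prop :=
  preproof r T s0 /\
  forall b Sq, inf_branch T b Sq -> exists k xs, progressing Sq k xs.

Definition labIGL_provable (s : sequent) : Prop :=
  exists T, inf_proof ruleIK4 T s.

(* Write F := □(□A → A).  After →R and □R (fresh y) the goal is the sequent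
   xRy, x:F ⇒ y:A, which is derived from itself by a finite block of rules:
   contract x:F, use □L to obtain y:□A → A, apply →L (its right premiss
   xRy, y:A ⇒ y:A is an identity), prove xRy, x:F ⇒ y:□A by □R with a fresh
   z, close yRz, xRy under transitivity and thin back to xRz, x:F ⇒ z:A.
   Along every infinite branch the label moves y ↦ z across yRz once per
   round, so the trace y, z, ... progresses. *)

From Stdlib Require Import List Permutation Lia.
Import ListNotations.

Definition freshl (s : sequent) : label := S (list_max (labels_seq s)).

Lemma freshl_fresh (s : sequent) : fresh (freshl s) s.
Proof.
  intros Hin.
  assert (Hall : Forall (fun k => k <= list_max (labels_seq s)) (labels_seq s))
    by (apply list_max_le; lia).
  rewrite Forall_forall in Hall.
  specialize (Hall _ Hin). unfold freshl in Hall. lia.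
Qed.

Lemma ruleIK4_intro (c0 c : sequent) (ps : list sequent) :
  seq_eq c c0 -> basic c0 ps ->
  length (rhs c) = 1 -> Forall (fun p => length (rhs p) = 1) ps ->
  ruleIK4 c ps.
Proof.
  intros Hc Hb Hone Hps. split; [|tauto].
  exists c0, ps. split; [exact Hc|split; [|exact Hb]].
  clear. induction ps; constructor; [|assumption].
  split; [tauto|split; apply Permutation_refl].
Qed.

Lemma ruleIK4_basic (c : sequent) (ps : list sequent) :
  basic c ps ->
  length (rhs c) = 1 -> Forall (fun p => length (rhs p) = 1) ps ->
  ruleIK4 c ps.
Proof.
  apply ruleIK4_intro. split; [tauto|split; apply Permutation_refl].
Qed.

Ltac by_basic r := apply ruleIK4_basic; [exact r|reflexivity|repeat constructor].

Section NodeSystems.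
(* Nodes [N] carry sequents [seqof] and have successors [kids]; unfolding
   from a root gives a tree whose node at path p is reached by following
   the chosen successors. *)
Variables (N : Type) (seqof : N -> sequent) (kids : N -> list N).

Fixpoint walk (m : N) (p : list nat) : option N :=
  match p with
  | [] => Some m
  | i :: q => match nth_error (kids m) i with Some m' => walk m' q | None => None end
  end.

Definition unfold_tree (root : N) : tree :=
  fun p => option_map seqof (walk root p).

Lemma walk_snoc (p : list nat) (m : N) (i : nat) :
  walk m (p ++ [i]) =
  match walk m p with Some m' => nth_error (kids m') i | None => None end.
Proof.
  revert m; induction p as [|j p IH]; simpl; intros m.
  - now destruct (nth_error (kids m) i).
  - now destruct (nth_error (kids m) j).
Qed.

Lemma unfold_preproof (r : sequent -> list sequent -> Prop) (root : N) :
  (forall m, r (seqof m) (map seqof (kids m))) ->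
  preproof r (unfold_tree root) (seqof root).
Proof.
  intros Hrule. split; [reflexivity|].
  intros p s Hs. unfold unfold_tree in Hs.
  destruct (walk root p) as [m|] eqn:Hw; [|discriminate].
  injection Hs as <-.
  exists (map seqof (kids m)). split; [apply Hrule|split]; intros i Hi;
    unfold unfold_tree; rewrite walk_snoc, Hw.
  - now rewrite nth_error_map.
  - rewrite length_map in Hi. now apply nth_error_None in Hi as ->.
Qed.

Definition kids_path (M : nat -> N) : Prop := forall i, In (M (S i)) (kids (M i)).

Lemma bpath_S (b : nat -> nat) (n : nat) : bpath b (S n) = bpath b n ++ [b n].
Proof. unfold bpath. now rewrite seq_S, map_app. Qed.

Lemma unfold_branch (root : N) (b : nat -> nat) (Sq : nat -> sequent) :
  inf_branch (unfold_tree root) b Sq ->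
  exists M, kids_path M /\ forall i, Sq i = seqof (M i).
Proof.
  intros Hb.
  assert (Hnode : forall i, exists m, walk root (bpath b i) = Some m /\ Sq i = seqof m).
  { intros i. specialize (Hb i). unfold unfold_tree in Hb.
    destruct (walk root (bpath b i)) as [m|]; [|discriminate].
    injection Hb as <-. eauto. }
  exists (fun i => match walk root (bpath b i) with Some m => m | None => root end).
  split.
  - intros i. destruct (Hnode i) as [m [Hm _]]. destruct (Hnode (S i)) as [m' [Hm' _]].
    rewrite Hm, Hm'. rewrite bpath_S, walk_snoc, Hm in Hm'.
    eapply nth_error_In; eauto.
  - intros i. destruct (Hnode i) as [m [Hm Hs]]. now rewrite Hm.
Qed.

Lemma progressing_ext (Sq Sq' : nat -> sequent) (k : nat) (xs : nat -> label) :
  (forall i, Sq i = Sq' i) -> progressing Sq k xs -> progressing Sq' k xs.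
Proof.
  unfold progressing, is_trace, progress_point. intros Heq [Htr Hinf].
  split.
  - intros i Hi. rewrite <- Heq. auto.
  - intros n. destruct (Hinf n) as [i Hi]. exists i. now rewrite <- Heq.
Qed.

Lemma unfold_inf_proof (r : sequent -> list sequent -> Prop) (root : N) :
  (forall m, r (seqof m) (map seqof (kids m))) ->
  (forall M, kids_path M -> exists k xs, progressing (fun i => seqof (M i)) k xs) ->
  inf_proof r (unfold_tree root) (seqof root).
Proof.
  intros Hrule Hpaths. split; [now apply unfold_preproof|].
  intros b Sq Hb.
  destruct (unfold_branch root b Sq Hb) as [M [HM HSq]].
  destruct (Hpaths M HM) as (k & xs & Hprog).
  exists k, xs. apply (progressing_ext _ _ _ _ (fun i => eq_sym (HSq i)) Hprog).
Qed.

Lemma kids_path_avoids (P : N -> Prop) (mu : N -> nat) :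
  (forall m m', P m -> In m' (kids m) -> P m' /\ mu m' < mu m) ->
  forall M, kids_path M -> forall i, ~ P (M i).
Proof.
  intros Hdec M HM.
  assert (Hbound : forall n i, P (M i) -> mu (M i) <= n -> False).
  { induction n as [|n IH]; intros i HP Hmu;
      destruct (Hdec _ _ HP (HM i)) as [HP' Hlt].
    - lia.
    - apply (IH (S i) HP'). lia. }
  intros i HP. exact (Hbound _ i HP (le_n _)).
Qed.

End NodeSystems.

Arguments unfold_tree {N} seqof kids root.
Arguments kids_path {N} kids M.

Lemma recurrent_of_descent {N : Type} (Q : N -> bool) (d : N -> nat) (M : nat -> N) :
  (forall i, Q (M i) = false -> d (M (S i)) < d (M i)) ->
  forall n, exists j, n <= j /\ Q (M j) = true.
Proof.
  intros Hdesc.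
  assert (Hbound : forall k n, d (M n) <= k -> exists j, n <= j /\ Q (M j) = true).
  { induction k as [|k IH]; intros n Hd;
      destruct (Q (M n)) eqn:HQ; try (exists n; split; [lia|exact HQ]);
      specialize (Hdesc n HQ).
    - lia.
    - destruct (IH (S n)) as [j [Hj HQj]]; [lia|]. exists j. split; [lia|exact HQj]. }
  intros n. exact (Hbound _ n (le_n _)).
Qed.

Lemma progressing_of_labels {N : Type} (seqof : N -> sequent) (M : nat -> N)
    (lab : N -> label) (Q : N -> bool) :
  (forall i, lab (M i) = lab (M (S i)) \/ In (lab (M i), lab (M (S i))) (rel (seqof (M i)))) ->
  (forall i, Q (M i) = true -> In (lab (M i), lab (M (S i))) (rel (seqof (M i)))) ->
  (forall n, exists j, n <= j /\ Q (M j) = true) ->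
  progressing (fun i => seqof (M i)) 0 (fun i => lab (M i)).
Proof.
  intros Hstep Hprog Hrec. split.
  - intros i _. apply Hstep.
  - intros n. destruct (Hrec n) as [j [Hj HQ]].
    exists j. split; [exact Hj|split; [lia|now apply Hprog]].
Qed.

(* Identity sequents R, y:B ⇒ y:B have finite proofs by induction on B:
   each node below is one stage of that proof, in any relational context. *)
Inductive axnode : Type :=
| AxId (R : list ratom) (y : label) (B : form)
| AxAndL1 (R : list ratom) (y : label) (B C : form)
| AxAndL2 (R : list ratom) (y : label) (B C : form)
| AxOrR1 (R : list ratom) (y : label) (B C : form)
| AxOrR2 (R : list ratom) (y : label) (B C : form)
| AxImpL (R : list ratom) (y : label) (B C : form)
| AxBoxL (R : list ratom) (y z : label) (B : form)
| AxDiaR (R : list ratom) (y z : label) (B : form).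

Definition axseq (n : axnode) : sequent :=
  match n with
  | AxId R y B => Seq R [(y, B)] [(y, B)]
  | AxAndL1 R y B C => Seq R [(y, And B C)] [(y, B)]
  | AxAndL2 R y B C => Seq R [(y, And B C)] [(y, C)]
  | AxOrR1 R y B C => Seq R [(y, B)] [(y, Or B C)]
  | AxOrR2 R y B C => Seq R [(y, C)] [(y, Or B C)]
  | AxImpL R y B C => Seq R [(y, Imp B C); (y, B)] [(y, C)]
  | AxBoxL R y z B => Seq ((y, z) :: R) [(y, Box B)] [(z, B)]
  | AxDiaR R y z B => Seq ((y, z) :: R) [(z, B)] [(y, Dia B)]
  end.

(* The right rule is applied first, except for ∨ and ◇ whose left rules
   keep the right-hand side a single formula. *)
Definition axkids (n : axnode) : list axnode :=
  match n with
  | AxId R y B =>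
      match B with
      | Var _ | Bot => []
      | And B C => [AxAndL1 R y B C; AxAndL2 R y B C]
      | Or B C => [AxOrR1 R y B C; AxOrR2 R y B C]
      | Imp B C => [AxImpL R y B C]
      | Box B => [AxBoxL R y (freshl (axseq (AxId R y (Box B)))) B]
      | Dia B => [AxDiaR R y (freshl (axseq (AxId R y (Dia B)))) B]
      end
  | AxAndL1 R y B _ | AxOrR1 R y B _ => [AxId R y B]
  | AxAndL2 R y _ C | AxOrR2 R y _ C => [AxId R y C]
  | AxImpL R y B C => [AxId R y B; AxId R y C]
  | AxBoxL R y z B | AxDiaR R y z B => [AxId ((y, z) :: R) z B]
  end.

Lemma axrule (n : axnode) : ruleIK4 (axseq n) (map axseq (axkids n)).
Proof.
  destruct n as [R y [p| |B C|B C|B C|B|B]|R y B C|R y B C|R y B C|R y B C|R y B C|R y z B|R y z B].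
  - by_basic (r_id R y p).
  - by_basic (r_botL R y [] [(y, Bot)]).
  - by_basic (r_andR R [(y, And B C)] [] y B C).
  - by_basic (r_orL R [] [(y, Or B C)] y B C).
  - by_basic (r_impR R [(y, Imp B C)] [] y B C).
  - apply ruleIK4_basic; [|reflexivity|repeat constructor].
    apply (r_boxR R [(y, Box B)] [] y _ B), freshl_fresh.
  - apply ruleIK4_basic; [|reflexivity|repeat constructor].
    apply (r_diaL R [] [(y, Dia B)] y _ B), freshl_fresh.
  - by_basic (r_andL1 R [] [(y, B)] y B C).
  - by_basic (r_andL2 R [] [(y, C)] y B C).
  - by_basic (r_orR1 R [(y, B)] [] y B C).
  - by_basic (r_orR2 R [(y, C)] [] y B C).
  - (* →L wants the principal formula last on the left *)
    apply (ruleIK4_intro (Seq R [(y, B); (y, Imp B C)] [(y, C)]));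
      [|exact (r_impL R [(y, B)] [] [] [(y, C)] y B C)|reflexivity|repeat constructor].
    split; [simpl; tauto|split; [apply perm_swap|apply Permutation_refl]].
  - by_basic (r_boxL R [] [(z, B)] y z B).
  - by_basic (r_diaR R [(z, B)] [] y z B).
Qed.

Fixpoint fsize (B : form) : nat :=
  match B with
  | Var _ | Bot => 0
  | And B C | Or B C | Imp B C => 1 + fsize B + fsize C
  | Box B | Dia B => 1 + fsize B
  end.

Definition axsize (n : axnode) : nat :=
  match n with
  | AxId _ _ B => 2 * fsize B
  | AxAndL1 _ _ B C | AxAndL2 _ _ B C | AxOrR1 _ _ B C | AxOrR2 _ _ B C
  | AxImpL _ _ B C => 2 * (fsize B + fsize C) + 1
  | AxBoxL _ _ _ B | AxDiaR _ _ _ B => 2 * fsize B + 1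
  end.

Lemma axkids_size (n n' : axnode) : In n' (axkids n) -> axsize n' < axsize n.
Proof.
  destruct n as [R y []| | | | | | |]; simpl; intros Hin;
    repeat (destruct Hin as [<-|Hin]; [simpl; lia|]); contradiction.
Qed.

Section Loeb.
Variable A : form.

Definition F : form := Box (Imp (Box A) A).

(* The nodes of the Löb proof, named after their role; [Loop x y] is the
   sequent xRy, x:F ⇒ y:A to which every round returns, and [Step x y z]
   is where the trace crosses yRz. *)
Inductive node : Type :=
| Goal (x : label)
| Unpack (x : label)
| Loop (x y : label)
| Dup (x y : label)
| Use (x y : label)
| Prem (x y : label)
| Step (x y z : label)
| Drop (x y z : label)
| Ax (n : axnode).

Definition seqof (m : node) : sequent :=
  match m with
  | Goal x => Seq [] [] [(x, Imp F (Box A))]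
  | Unpack x => Seq [] [(x, F)] [(x, Box A)]
  | Loop x y => Seq [(x, y)] [(x, F)] [(y, A)]
  | Dup x y => Seq [(x, y)] [(x, F); (x, F)] [(y, A)]
  | Use x y => Seq [(x, y)] [(x, F); (y, Imp (Box A) A)] [(y, A)]
  | Prem x y => Seq [(x, y)] [(x, F)] [(y, Box A)]
  | Step x y z => Seq [(y, z); (x, y)] [(x, F)] [(z, A)]
  | Drop x y z => Seq [(x, z); (x, y); (y, z)] [(x, F)] [(z, A)]
  | Ax n => axseq n
  end.

(* The world introduced by the first □R. *)
Definition world (x : label) : label := freshl (seqof (Unpack x)).

Definition kids (m : node) : list node :=
  match m with
  | Goal x => [Unpack x]
  | Unpack x => [Loop x (world x)]
  | Loop x y => [Dup x y]
  | Dup x y => [Use x y]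
  | Use x y => [Prem x y; Ax (AxId [(x, y)] y A)]
  | Prem x y => [Step x y (freshl (seqof (Prem x y)))]
  | Step x y z => [Drop x y z]
  | Drop x y z => [Loop x z]
  | Ax n => map Ax (axkids n)
  end.

Lemma node_rule (m : node) : ruleIK4 (seqof m) (map seqof (kids m)).
Proof.
  destruct m as [x|x|x y|x y|x y|x y|x y z|x y z|n].
  - by_basic (r_impR [] [] [] x F (Box A)).
  - apply ruleIK4_basic; [|reflexivity|repeat constructor].
    apply (r_boxR [] [(x, F)] [] x _ A), freshl_fresh.
  - by_basic (r_cL [(x, y)] [] [(y, A)] (x, F)).
  - by_basic (r_boxL [] [(x, F)] [(y, A)] x y (Imp (Box A) A)).
  - by_basic (r_impL [(x, y)] [(x, F)] [] [] [(y, A)] y (Box A) A).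
  - apply ruleIK4_basic; [|reflexivity|repeat constructor].
    apply (r_boxR [(x, y)] [(x, F)] [] y _ A), freshl_fresh.
  - (* transitivity, with the relational atoms reordered *)
    apply (ruleIK4_intro (Seq [(x, y); (y, z)] [(x, F)] [(z, A)]));
      [|exact (r_tr [] [(x, F)] [(z, A)] x y z)|reflexivity|repeat constructor].
    split; [simpl; tauto|split; apply Permutation_refl].
  - by_basic (r_thin [(x, z)] [(x, y); (y, z)] [(x, F)] [(z, A)]).
  - simpl. rewrite map_map. exact (axrule n).
Qed.

Definition is_ax (m : node) : bool := match m with Ax _ => true | _ => false end.
Definition is_step (m : node) : bool := match m with Step _ _ _ => true | _ => false end.

Lemma kids_path_loops (M : nat -> node) : kids_path kids M -> forall i, is_ax (M i) = false.
Proof.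
  intros HM i. apply Bool.not_true_is_false. revert i.
  apply (kids_path_avoids _ kids (fun m => is_ax m = true)
           (fun m => match m with Ax n => axsize n | _ => 0 end)); [|exact HM].
  intros [] m' Hax Hin; try discriminate.
  apply in_map_iff in Hin as [n' [<- Hin]].
  split; [reflexivity|now apply axkids_size].
Qed.

(* The trace label of a loop node, and its distance to the next [Step]. *)
Definition lab (m : node) : label :=
  match m with
  | Goal x | Unpack x => world x
  | Loop _ y | Dup _ y | Use _ y | Prem _ y | Step _ y _ => y
  | Drop _ _ z => z
  | Ax _ => 0
  end.

Definition dist (m : node) : nat :=
  match m with
  | Goal _ => 6 | Unpack _ => 5 | Loop _ _ => 4 | Dup _ _ => 3 | Use _ _ => 2
  | Prem _ _ => 1 | Step _ _ _ => 0 | Drop _ _ _ => 5 | Ax _ => 0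
  end.

Lemma loop_trace (m m' : node) :
  is_ax m = false -> In m' (kids m) -> is_ax m' = false ->
  lab m = lab m' \/ In (lab m, lab m') (rel (seqof m)).
Proof.
  destruct m; try discriminate; simpl; intros _ Hin Hax';
    repeat (destruct Hin as [<-|Hin]; [simpl; auto; discriminate|]); contradiction.
Qed.

Lemma step_progress (m m' : node) :
  is_step m = true -> In m' (kids m) -> In (lab m, lab m') (rel (seqof m)).
Proof.
  destruct m; try discriminate; simpl. intros _ [<-|[]]. simpl. auto.
Qed.

Lemma loop_descent (m m' : node) :
  is_ax m = false -> is_step m = false -> In m' (kids m) -> is_ax m' = false ->
  dist m' < dist m.
Proof.
  destruct m; try discriminate; simpl; intros _ _ Hin Hax';
    repeat (destruct Hin as [<-|Hin]; [simpl; try lia; discriminate|]); contradiction.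
Qed.

Lemma loop_progressing (M : nat -> node) :
  kids_path kids M -> exists k xs, progressing (fun i => seqof (M i)) k xs.
Proof.
  intros HM. pose proof (kids_path_loops M HM) as Hloop.
  exists 0, (fun i => lab (M i)).
  apply (progressing_of_labels seqof M lab is_step).
  - intros i. exact (loop_trace _ _ (Hloop i) (HM i) (Hloop (S i))).
  - intros i Hstep. exact (step_progress _ _ Hstep (HM i)).
  - apply (recurrent_of_descent is_step dist M).
    intros i Hstep. exact (loop_descent _ _ (Hloop i) Hstep (HM i) (Hloop (S i))).
Qed.

End Loeb.

Theorem mainTheorem15 : forall (A : form) (x : label),
  labIGL_provable (Seq [] [] [(x, Imp (Box (Imp (Box A) A)) (Box A))]).
Proof.
  intros A x.
  exists (unfold_tree (seqof A) (kids A) (Goal x)).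
  apply unfold_inf_proof.
  - apply node_rule.
  - apply loop_progressing.
Qed.
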